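(* For every integer $j\ge0$ let \[ \beta_j(x)=\sum_{s=0}^j\binom{j-\frac12}{s}\binom{j}{s}x^{2j-2s}(x^2-1)^s . \] Then $\beta_j(x)=P_{2j}(x)$, where $P_n(x)=\frac{1}{2^nn!}\frac{d^n}{dx^n}(x^2-1)^n$ is the $n$-th Legendre polynomial.
   Context: $\binom{j-\frac12}{s}=\frac{(j-\frac12)(j-\frac32)\cdots(j-\frac12-s+1)}{s!}$. *)

From mathcomp Require Import all_boot all_order all_algebra.
Set Implicit Arguments. Unset Strict Implicit. Unset Printing Implicit Defensive.
Import Order.TTheory GRing.Theory Num.Theory.
Local Open Scope ring_scope.

Definition gbinom (R : fieldType) (a : R) (s : nat) : R :=
  (\prod_(i < s) (a - i%:R)) / (s`!)%:R.

Definition beta (R : fieldType) (j : nat) : {poly R} :=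
  \sum_(s < j.+1)
     (gbinom (j%:R - 2^-1) s * ('C(j, s))%:R) *: ('X^(2 * j - 2 * s) * ('X^2 - 1) ^+ s).

Definition legendre (R : fieldType) (n : nat) : {poly R} :=
  ((2 ^ n * n`!)%:R)^-1 *: (('X^2 - 1) ^+ n)^`(n).

From mathcomp Require Import all_boot all_order all_algebra.
From mathcomp Require Import ring zify.
Set Implicit Arguments. Unset Strict Implicit. Unset Printing Implicit Defensive.
Import Order.TTheory GRing.Theory Num.Theory.

(* Expanding (x^2 - 1)^s binomially writes both sides as sums of
   c_k x^(2j-2k), k <= j.  Differentiating Rodrigues' formula gives
   c_k = (-1)^k C(2j,k) (4j-2k)^_(2j) / (4^j (2j)!) for P_2j, while for beta_j
   c_k = (-1)^k sum_s binom(j-1/2,s) C(j,s) C(s,k).  The identity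
   C(j,s) C(s,k) = C(j,k) C(j-k,s-k) and Chu-Vandermonde collapse the latter
   sum to C(j,k) binom(2j-k-1/2, j).  Pairing consecutive factors of the
   falling factorial, (2m-2i)(2m-2i-1) = 4(m-i)(m-1/2-i), turns
   (4j-2k)^_(2j) into the same half-integer binomial, so both values agree. *)

Lemma bin_mul_bin n m k : k <= m -> m <= n ->
  'C(n, m) * 'C(m, k) = 'C(n, k) * 'C(n - k, m - k).
Proof.
move=> le_km le_mn; apply/eqP.
rewrite -(eqn_pmul2r (_ : 0 < k`! * (m - k)`! * (n - m)`!)) ?muln_gt0 ?fact_gt0 //.
apply/eqP; transitivity n`!.
  by rewrite -(bin_fact le_mn) -(bin_fact le_km); ring.
have le_mk : m - k <= n - k by lia.
rewrite -(bin_fact (leq_trans le_km le_mn)) -(bin_fact le_mk).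
by rewrite (_ : n - k - (m - k) = n - m); [ring | lia].
Qed.

Lemma bin_mul_ffact m n k : k <= m ->
  'C(m + n, k) * (m + n - k) ^_ n = (m + n) ^_ n * 'C(m, k).
Proof.
move=> le_km; apply/eqP.
rewrite -(eqn_pmul2r (_ : 0 < k`! * (m - k)`!)) ?muln_gt0 ?fact_gt0 //.
apply/eqP; transitivity (m + n)`!.
  have le_n : n <= m + n - k by lia.
  rewrite -(bin_fact (leq_trans le_km (leq_addr n m))) -(ffact_fact le_n).
  by rewrite (_ : m + n - k - n = m - k); [ring | lia].
by rewrite -(ffact_fact (leq_addl m n)) addnK -(bin_fact le_km); ring.
Qed.

Local Open Scope ring_scope.

Lemma natr_ffact (R : pzRingType) m n : (n <= m)%N ->
  (m ^_ n)%:R = \prod_(i < n) (m%:R - i%:R) :> R.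
Proof.
move=> le_nm; rewrite ffact_prod natr_prod; apply: eq_bigr => i _.
by rewrite natrB // (leq_trans (ltnW (ltn_ord i))).
Qed.

Lemma prod_ord_double (R : pzSemiRingType) n (F : nat -> R) :
  \prod_(i < 2 * n) F i = \prod_(i < n) (F (2 * i)%N * F (2 * i).+1).
Proof.
elim: n => [|n IHn]; first by rewrite !big_ord0.
by rewrite mulnS !big_ord_recr /= IHn mulrA.
Qed.

Lemma expr_X2_sub1 (R : comNzRingType) n m : (n < m)%N ->
  ('X^2 - 1) ^+ n = \sum_(i < m) ((-1) ^+ i *+ 'C(n, i)) *: 'X^(2 * (n - i)) :> {poly R}.
Proof.
move=> /subnKC <-; rewrite big_split_ord /= [X in _ = _ + X]big1 ?addr0 => [|i _].
  rewrite exprBn; apply: eq_bigr => i _.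
  by rewrite expr1n mulr1 -exprM -mul_polyC rmorphMn rmorphXn rmorphN1 mulrnAl.
by rewrite bin_small ?mulr0n ?scale0r // ltn_addr.
Qed.

Lemma beta_expand (R : fieldType) j :
  beta R j = \sum_(k < j.+1)
    ((-1) ^+ k * \sum_(s < j.+1) gbinom (j%:R - 2^-1) s * ('C(j, s) * 'C(s, k))%:R)
      *: 'X^(2 * j - 2 * k).
Proof.
rewrite /beta; pose c s := gbinom (j%:R - 2^-1 : R) s * 'C(j, s)%:R.
transitivity (\sum_(s < j.+1) \sum_(k < j.+1)
                (c s * ((-1) ^+ k *+ 'C(s, k))) *: 'X^(2 * j - 2 * k)).
  apply: eq_bigr => s _; rewrite (expr_X2_sub1 _ (ltn_ord s)) mulr_sumr scaler_sumr.
  apply: eq_bigr => k _; case: (leqP k s) => [le_ks | lt_sk]; last first.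
    by rewrite (bin_small lt_sk) !(mulr0n, scale0r, mulr0, scaler0).
  rewrite -scalerAr -exprD scalerA; congr (_ *: 'X^_).
  have := ltn_ord s; lia.
rewrite exchange_big; apply: eq_bigr => k _; rewrite -scaler_suml mulr_sumr.
congr (_ *: _); apply: eq_bigr => s _.
rewrite /c natrM -mulr_natr; ring.
Qed.

Lemma legendre_even_expand (R : fieldType) j :
  legendre R (2 * j) = \sum_(k < j.+1)
    ((-1) ^+ k * ('C(2 * j, k) * (2 * (2 * j - k)) ^_ (2 * j))%:R
       / (2 ^ (2 * j) * (2 * j)`!)%:R) *: 'X^(2 * j - 2 * k).
Proof.
rewrite /legendre (expr_X2_sub1 _ (_ : 2 * j < j.+1 + j)%N); last by lia.
rewrite raddf_sum scaler_sumr big_split_ord /= [X in _ + X]big1 ?addr0 => [|i _].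
  apply: eq_bigr => k _; rewrite linearZ /= derivnXn -scaler_nat !scalerA.
  congr (_ *: 'X^_); last by have := ltn_ord k; lia.
  rewrite natrM -mulr_natr; ring.
rewrite linearZ /= derivnXn ffact_small ?mulr0n ?scaler0 //.
by have := ltn_ord i; lia.
Qed.

Section GeneralizedBinomial.
Variable R : numFieldType.
Implicit Types (a b : R) (k m n s : nat).

Lemma gbinomS b s : gbinom (b + 1) s.+1 = gbinom b s.+1 + gbinom b s.
Proof.
rewrite /gbinom big_ord_recl big_ord_recr /=.
under eq_bigr => i _ do rewrite /bump /= add1n -natr1 opprD addrACA subrr addr0.
rewrite factS natrM; field.
by rewrite nat1r !pnatr_eq0 -lt0n fact_gt0.
Qed.

Lemma gbinom_vandermonde a m k :
  \sum_(u < m.+1) 'C(m, u)%:R * gbinom a (k + u) = gbinom (a + m%:R) (k + m).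
Proof.
elim: m k => [|m IHm] k.
  by rewrite big_ord_recl big_ord0 mul1r !addr0 addn0.
rewrite -natr1 addrA -addSnnS addSn gbinomS -addSn -!IHm addrC.
rewrite big_ord_recl [X in _ = X + _]big_ord_recl !bin0.
under eq_bigr => i _ do rewrite binS natrD mulrDl.
rewrite big_split /= addrA; congr (_ + _ + _).
  by rewrite big_ord_recr /= bin_small // mul0r addr0.
by apply: eq_bigr => i _; rewrite addSnnS.
Qed.

Lemma sum_gbinom_bin_bin a n k : (k <= n)%N ->
  \sum_(s < n.+1) gbinom a s * ('C(n, s) * 'C(s, k))%:R
  = 'C(n, k)%:R * gbinom (a + (n - k)%:R) n.
Proof.
move=> /subnKC <-; move: (n - k)%N => m.
rewrite -addnS big_split_ord /= big1 ?add0r => [|i _]; last first.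
  by rewrite (bin_small (ltn_ord i)) muln0 mulr0.
rewrite addKn -gbinom_vandermonde mulr_sumr; apply: eq_bigr => i _.
have le_im : (i <= m)%N by rewrite -ltnS.
rewrite bin_mul_bin ?leq_addr ?leq_add2l // !addKn natrM mulrCA.
by rewrite [_ * gbinom _ _]mulrC.
Qed.

Lemma natr_ffact_double m n : (n <= m)%N ->
  ((2 * m) ^_ (2 * n))%:R
  = 2 ^+ (2 * n) * (m ^_ n)%:R * \prod_(i < n) (m%:R - 2^-1 - i%:R) :> R.
Proof.
move=> le_nm; rewrite !natr_ffact ?leq_mul2l //.
rewrite (prod_ord_double n (fun i => (2 * m)%:R - i%:R)).
rewrite (eq_bigr (fun i : 'I_n => 2 * (m%:R - i%:R) * (2 * (m%:R - 2^-1 - i%:R)))).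
  by rewrite !big_split /= prodr_const card_ord mul2n -addnn exprD mulrACA mulrA.
by move=> i _; rewrite -natr1 !natrM; field.
Qed.

Lemma bin_gbinom_half j k : (k <= j)%N ->
  'C(j, k)%:R * gbinom ((2 * j - k)%:R - 2^-1) j
  = ('C(2 * j, k) * (2 * (2 * j - k)) ^_ (2 * j))%:R
      / (2 ^ (2 * j) * (2 * j)`!)%:R :> R.
Proof.
move=> le_kj.
have ffact_neq0 : ((2 * j) ^_ j)%:R != 0 :> R.
  by rewrite pnatr_eq0 -lt0n ffact_gt0 leq_pmull.
have bin_ffactE : ('C(2 * j, k) * (2 * j - k) ^_ j = 'C(j, k) * (2 * j) ^_ j)%N.
  by rewrite mul2n -addnn bin_mul_ffact // mulnC.
have binE :
    'C(j, k)%:R = 'C(2 * j, k)%:R * ((2 * j - k) ^_ j)%:R / ((2 * j) ^_ j)%:R :> R.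
  by rewrite -natrM bin_ffactE natrM mulfK.
have factE : (2 * j)`! = ((2 * j) ^_ j * j`!)%N.
  by rewrite -{1}(ffact_fact (leq_pmull j _)) // (_ : 2 * j - j = j)%N //; lia.
rewrite binE factE natrM natr_ffact_double; last by lia.
rewrite /gbinom !natrM natrX.
by field; rewrite ffact_neq0 expf_neq0 ?pnatr_eq0 -?lt0n ?fact_gt0.
Qed.

End GeneralizedBinomial.

Theorem lemma6p8 (R : numFieldType) (j : nat) :
  beta R j = legendre R (2 * j).
Proof.
rewrite beta_expand legendre_even_expand; apply: eq_bigr => k _.
have le_kj : (k <= j)%N by rewrite -ltnS.
have shiftE : j%:R - 2^-1 + (j - k)%:R = (2 * j - k)%:R - 2^-1 :> R.
  by rewrite (_ : 2 * j - k = j + (j - k))%N ?natrD; [ring | lia].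
by rewrite sum_gbinom_bin_bin // shiftE bin_gbinom_half // mulrA.
Qed.
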